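(* Consider the case of independent observations $X_t=\mathbf{A}_0Z_t$, so that the limiting spectral distribution of $\Sigma=\mathrm{Var}(X_t)$ is $F^{\Sigma}=\sum_{j=1}^J\omega_j^0\delta_{\lambda_j^0}$ with $\boldsymbol\omega^0\in\Delta^J$ and distinct nonnegative reals $\lambda_1^0,\dots,\lambda_J^0$; here the coordinate spectral densities are constant: $h(\lambda_j^0,\theta)\equiv\lambda_j^0$. Let $p/n\to c\in(0,\infty)$, let $\mathcal{G}=\{g_0\}$ with $g_0(\theta)\equiv1$, and let $\mathcal{Z}=\{z_1,\dots,z_D\}$ be a finite set of points in a closed bounded subset of $\mathbb{C}^+$ with $D\ge J$ and $z_1,\dots,z_D$ distinct. Let $\mathbf{B}$ be any $J\times(J-1)$ matrix of rank $J-1$ with $\mathbf{B}^T\mathbf{1}_J=0$. Then $\mathbf{B}^T\mathcal{M}_{\mathcal{G},\mathcal{Z}}(\boldsymbol\Lambda_J^0,\boldsymbol\omega^0)\mathbf{B}$ is positive definite, where $$\mathcal{M}_{\mathcal{G},\mathcal{Z}}(\boldsymbol\Lambda_J^0,\boldsymbol\omega^0)=\frac{1}{|\mathcal{Z}|}\sum_{z\in\mathcal{Z}}\Big(\frac{1}{2\pi}\int_0^{2\pi}\frac{\mathbf{v}^0(z)\,d\theta}{(cM^0(z)-z)^2}\Big)\Big(\frac{1}{2\pi}\int_0^{2\pi}\frac{\mathbf{v}^0(z)\,d\theta}{(cM^0(z)-z)^2}\Big)^*,$$ with $\mathbf{v}^0(z)=\big(\lambda_j^0/(1+K^0(\lambda_j^0,z))\big)_{j=1}^J$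 and $M^0(z)=\sum_{j=1}^J\omega_j^0\lambda_j^0/(1+K^0(\lambda_j^0,z))$.
   Context: $\Delta^J=\{\mathbf{x}\in\mathbb{R}^J:x_j\ge0,\sum_jx_j=1\}$, $\mathbb{C}^+=\{z:\Im z>0\}$. $K^0$ and $M^0$ are the limiting objects for $g_0\equiv1$: $K^0(\lambda,z)=\frac{1}{2\pi}\int_0^{2\pi}\frac{\lambda\,d\theta}{cM^0(z)-z}=\lambda S^0(z)$ where $S^0(z)=\frac{1}{cM^0(z)-z}$ is the Stieltjes transform of the limiting spectral distribution of $\frac1n\tilde{\mathbf{X}}_n^*\tilde{\mathbf{X}}_n$ (equivalently of the $n\times n$ companion of the sample covariance matrix) under the true distribution $\sum_j\omega_j^0\delta_{\lambda_j^0}$, and $K^0(\lambda,\cdot)$ is required to be a Stieltjes transform of a measure of total mass $\lambda$. This is the matrix whose positive definiteness (after compression by $\mathbf{B}$) is a sufficient condition for consistency of the $L^2$ minimum-Stieltjes-distance estimator of the weights $\boldsymbol\omega^0$. *)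

From HB Require Import structures.
From mathcomp Require Import all_boot all_order all_algebra.
From mathcomp Require Import all_classical all_reals all_analysis.
From mathcomp Require Import complex.
Set Implicit Arguments. Unset Strict Implicit. Unset Printing Implicit Defensive.
Import Order.TTheory GRing.Theory Num.Theory.
Local Open Scope ring_scope.
Local Open Scope complex_scope.

Section Defs.
Variable R : realType.
Local Notation C := R[i].

(* (1/2pi) int_0^{2pi} dtheta : the theta-average of a theta-independent
   integrand (here the coordinate spectral densities and g_0 are constant). *)
Definition theta_avg : R :=
  (2 * pi)^-1 * \int[@lebesgue_measure R]_(x in `[0%R, 2 * pi]%classic) (1 : R).

(* M^0(z) as a function of S = S^0(z), using K^0(lambda,z) = lambda S^0(z). *)
Definition M0 (J : nat) (lam om : 'I_J -> R) (S : C) : C :=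
  \sum_(j < J) (om j)%:C * (lam j)%:C / (1 + (lam j)%:C * S).

(* S0 is the Stieltjes transform of the LSD of the n x n companion matrix:
   for each z in C^+, S0 z lies in C^+ and S0 z = 1/(c M^0(z) - z)
   (Silverstein-Choi: this determines S0 z uniquely). *)
Definition is_S0 (c : R) (J : nat) (lam om : 'I_J -> R) (S0 : C -> C) : Prop :=
  forall z : C, 0 < Im z ->
    0 < Im (S0 z) /\ S0 z = (c%:C * M0 lam om (S0 z) - z)^-1.

Definition v0 (J : nat) (lam : 'I_J -> R) (S : C) : 'cV[C]_J :=
  \col_(j < J) ((lam j)%:C / (1 + (lam j)%:C * S)).

Definition u0 (c : R) (J : nat) (lam om : 'I_J -> R) (S0 : C -> C) (z : C)
  : 'cV[C]_J :=
  ((theta_avg%:C) / (c%:C * M0 lam om (S0 z) - z) ^+ 2) *: v0 lam (S0 z).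

Definition adjmx (m n : nat) (A : 'M[C]_(m, n)) : 'M[C]_(n, m) :=
  (map_mx conjc A)^T.

Definition calM (c : R) (J D : nat) (lam om : 'I_J -> R) (S0 : C -> C)
  (z : 'I_D -> C) : 'M[C]_J :=
  (D%:R)^-1 *: \sum_(d < D) (u0 c lam om S0 (z d) *m adjmx (u0 c lam om S0 (z d))).

Definition posdef (n : nat) (A : 'M[C]_n) : Prop :=
  adjmx A = A /\
  forall x : 'cV[C]_n, x != 0 -> 0 < (adjmx x *m A *m x) 0 0.

End Defs.

From HB Require Import structures.
From mathcomp Require Import all_boot all_order all_algebra.
From mathcomp Require Import all_classical all_reals all_analysis.
From mathcomp Require Import complex ring zify.
Set Implicit Arguments. Unset Strict Implicit. Unset Printing Implicit Defensive.
Import Order.TTheory GRing.Theory Num.Theory.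
Local Open Scope ring_scope.
Local Open Scope complex_scope.

(* Since theta_avg = 1, calM = D^-1 * sum_d u_d u_d^* where u_d is a nonzero
   multiple of v^0(z_d); so for y = B x the quadratic form is
   D^-1 * sum_d |u_d^* y|^2, and y <> 0 (B has full column rank) with
   sum_j y_j = 0 (B^T 1 = 0).  If every u_d^* y vanished, the rational function
   sum_j conj(y_j) lam_j / (1 + lam_j S) would vanish at the D >= J distinct
   points S^0(z_d) (S^0 is injective on C^+ since z = c M^0(S) - 1/S).  Its
   numerator over prod_j (1 + lam_j S) has degree < J, hence is zero;
   evaluating it at the poles -1/lam_j forces y_j = 0 whenever lam_j <> 0, and
   the at most one remaining coordinate is killed by sum_j y_j = 0. *)

Section PartialFractions.
Variables (F : fieldType) (J : nat) (lam a : 'I_J -> F).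

Definition pf_numer : {poly F} :=
  \sum_(j < J) (a j * lam j) *: \prod_(k < J | k != j) (1 + lam k *: 'X).

Lemma size_pf_numer : (size pf_numer <= J)%N.
Proof.
apply: leq_trans (size_sum _ _ _) _; apply/bigmax_leqP => j _.
apply: leq_trans (size_scale_leq _ _) _.
apply: leq_trans (size_poly_prod_leq _ _) _.
have size_factor k : (size ((1 + lam k *: 'X)%R : {poly F}) <= 2)%N.
  apply: leq_trans (size_polyD _ _) _.
  by rewrite geq_max size_poly1 (leq_trans (size_scale_leq _ _)) ?size_polyX.
have : (\sum_(k | k != j) size ((1 + lam k *: 'X)%R : {poly F})
         <= \sum_(k | k != j) 2)%N by apply: leq_sum => k _.
rewrite sum_nat_const cardC1 card_ord.
by move: (\sum_(k | _) _) (ltn_ord j) => s; lia.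
Qed.

Lemma horner_pf_numer t : (forall k, 1 + lam k * t != 0) ->
  pf_numer.[t] =
  (\prod_k (1 + lam k * t)) * \sum_j a j * (lam j / (1 + lam j * t)).
Proof.
move=> t_ok; rewrite horner_sum mulr_sumr; apply: eq_bigr => j _.
rewrite hornerZ horner_prod [in RHS](bigD1 j) //=.
under eq_bigr => k _ do rewrite hornerD hornerC hornerZ hornerX.
by move: (\prod_(k | _) _) (t_ok j) => P tj; field.
Qed.

Lemma pf_numer_eq0 : injective lam -> pf_numer = 0 ->
  forall j, lam j != 0 -> a j = 0.
Proof.
move=> lam_inj Q0 j lj.
have := congr1 (horner^~ (- (lam j)^-1)) Q0.
rewrite /= horner0 horner_sum (bigD1 j) //= [X in _ + X]big1 ?addr0; last first.
  move=> k kj; rewrite hornerZ horner_prod (bigD1 j) 1?eq_sym //=.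
  by rewrite hornerD hornerC hornerZ hornerX mulrN mulfV // subrr mul0r mulr0.
rewrite hornerZ horner_prod => /eqP; rewrite !mulf_eq0 (negbTE lj) orbF.
case/orP => [/eqP //|]; rewrite prodf_seq_eq0 => /hasP [k _ /andP [kj]].
rewrite hornerD hornerC hornerZ hornerX mulrN addr_eq0 opprK => /eqP lk.
have : lam k = lam j by rewrite -[lam k]mulr1 -(mulVf lj) mulrA -lk mul1r.
by move/lam_inj/eqP; rewrite (negbTE kj).
Qed.

Lemma partial_fractions_free (D : nat) (s : 'I_D -> F) :
  injective lam -> (J <= D)%N -> injective s ->
  (forall k d, 1 + lam k * s d != 0) ->
  \sum_j a j = 0 ->
  (forall d, \sum_j a j * (lam j / (1 + lam j * s d)) = 0) ->
  forall j, a j = 0.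
Proof.
move=> lam_inj JD s_inj s_ok sum_a pf_s.
have Q0 : pf_numer = 0.
  apply/eqP/negPn/negP => nz.
  have := max_poly_roots nz (rs := [seq s d | d <- enum 'I_D]).
  rewrite map_inj_uniq ?enum_uniq // size_map size_enum_ord.
  have -> : all (root pf_numer) [seq s d | d <- enum 'I_D].
    apply/allP => _ /mapP [d _ ->].
    by rewrite /root horner_pf_numer // pf_s mulr0.
  move=> /(_ isT isT) DJ.
  by have := leq_ltn_trans JD (leq_trans DJ size_pf_numer); rewrite ltnn.
have a_nz_pole := pf_numer_eq0 lam_inj Q0.
move=> i; have [li|] := eqVneq (lam i) 0; last exact: a_nz_pole.
move: sum_a; rewrite (bigD1 i) //= big1 ?addr0 // => j ji.
by apply: a_nz_pole; rewrite -li; apply: contra ji => /eqP/lam_inj ->.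
Qed.

End PartialFractions.

Section Adjoint.
Variable R : realType.
Local Notation C := R[i].
Local Notation realmx B := (map_mx (fun r : R => r%:C) B).

Lemma adjmxE m n (A : 'M[C]_(m, n)) i j : adjmx A i j = conjc (A j i).
Proof. by rewrite !mxE. Qed.

Lemma adjmxK m n (A : 'M[C]_(m, n)) : adjmx (adjmx A) = A.
Proof. by apply/matrixP => i j; rewrite !adjmxE conjcK. Qed.

Lemma adjmxM m n p (A : 'M[C]_(m, n)) (B : 'M[C]_(n, p)) :
  adjmx (A *m B) = adjmx B *m adjmx A.
Proof. by rewrite /adjmx map_mxM trmx_mul. Qed.

Lemma adjmxZ m n (k : C) (A : 'M[C]_(m, n)) :
  adjmx (k *: A) = conjc k *: adjmx A.
Proof. by apply/matrixP => i j; rewrite !mxE rmorphM. Qed.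

Lemma adjmx_sum m n I (r : seq I) (F : I -> 'M[C]_(m, n)) :
  adjmx (\sum_(i <- r) F i) = \sum_(i <- r) adjmx (F i).
Proof. by rewrite /adjmx map_mx_sum raddf_sum. Qed.

Lemma adjmx_real m n (B : 'M[R]_(m, n)) : adjmx (realmx B) = realmx B^T.
Proof. by apply/matrixP => i j; rewrite adjmxE !mxE conjc_real. Qed.

Lemma adjmx_mul_col n (u y : 'cV[C]_n) :
  (adjmx u *m y) 0 0 = conjc (\sum_j u j 0 * conjc (y j 0)).
Proof.
rewrite mxE rmorph_sum; apply: eq_bigr => j _.
by rewrite adjmxE rmorphM /= conjcK.
Qed.

Lemma gram_hermitian n D (k : C) (u : 'I_D -> 'cV[C]_n) : conjc k = k ->
  adjmx (k *: \sum_d u d *m adjmx (u d)) = k *: \sum_d u d *m adjmx (u d).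
Proof.
move=> k_real; rewrite adjmxZ k_real adjmx_sum; congr (_ *: _).
by apply: eq_bigr => d _; rewrite adjmxM adjmxK.
Qed.

Lemma gram_formE n D (k : C) (u : 'I_D -> 'cV[C]_n) (y : 'cV[C]_n) :
  (adjmx y *m (k *: \sum_d u d *m adjmx (u d)) *m y) 0 0
  = k * \sum_d `|(adjmx (u d) *m y) 0 0| ^+ 2.
Proof.
rewrite -scalemxAr -scalemxAl mulmx_sumr mulmx_suml mxE summxE; congr (_ * _).
apply: eq_bigr => d _; rewrite mulmxA -(mulmxA _ _ y) sqr_normc.
rewrite -[adjmx y *m u d]adjmxK adjmxM adjmxK [LHS]mxE big_ord1 adjmxE.
by rewrite mulrC [ord0]ord1.
Qed.

Lemma gram_form_gt0 n D (u : 'I_D -> 'cV[C]_n) (y : 'cV[C]_n) d :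
  (adjmx (u d) *m y) 0 0 != 0 ->
  0 < (adjmx y *m (D%:R^-1 *: \sum_d u d *m adjmx (u d)) *m y) 0 0.
Proof.
move=> ud; have D_gt0 : (0 < D)%N := leq_ltn_trans (leq0n d) (ltn_ord d).
rewrite gram_formE mulr_gt0 ?invr_gt0 ?ltr0n //.
rewrite (bigD1 d) //= ltr_wpDr ?exprn_gt0 ?normr_gt0 //.
by apply: sumr_ge0 => e _; apply: exprn_ge0.
Qed.

Lemma realmx_mul_eq0 n m (B : 'M[R]_(n, m)) (x : 'cV[C]_m) :
  \rank B = m -> (realmx B *m x == 0) = (x == 0).
Proof.
move=> rkB; have free_Bt : row_free (realmx B)^T.
  by rewrite /row_free mxrank_tr mxrank_map rkB.
by rewrite -trmx_eq0 trmx_mul mulmx_free_eq0 // trmx_eq0.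
Qed.

Lemma sum_realmx_mul n m (B : 'M[R]_(n, m)) (x : 'cV[C]_m) :
  B^T *m (const_mx 1 : 'cV[R]_n) = 0 -> \sum_j (realmx B *m x) j 0 = 0.
Proof.
move=> B1; under eq_bigr => j _ do rewrite mxE.
rewrite exchange_big big1 // => i _; under eq_bigr => j _ do rewrite mxE.
have sumB : \sum_j B j i = 0.
  have := congr1 (fun A : 'cV[R]_m => A i 0) B1; rewrite /= !mxE => sumB.
  by rewrite -[RHS]sumB; apply: eq_bigr => j _; rewrite !mxE mulr1.
by rewrite -mulr_suml -rmorph_sum sumB mul0r.
Qed.

Lemma posdef_compress n m (A : 'M[C]_n) (B : 'M[R]_(n, m))
    (P : 'cV[C]_n -> Prop) :
  adjmx A = A -> \rank B = m ->
  (forall x, P (realmx B *m x)) ->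
  (forall y, P y -> y != 0 -> 0 < (adjmx y *m A *m y) 0 0) ->
  posdef (realmx B^T *m A *m realmx B).
Proof.
move=> A_herm rkB PB A_pos; split.
  by rewrite !adjmxM !adjmx_real trmxK A_herm mulmxA.
move=> x x0; have -> : adjmx x *m (realmx B^T *m A *m realmx B) *m x
                       = adjmx (realmx B *m x) *m A *m (realmx B *m x).
  by rewrite adjmxM adjmx_real !mulmxA.
by apply: A_pos; [exact: PB | rewrite realmx_mul_eq0].
Qed.

End Adjoint.

Section Stieltjes.
Variable R : realType.
Local Notation C := R[i].

Lemma theta_avg1 : theta_avg R = 1.
Proof.
have pi2_gt0 : (0 < 2 * pi :> R) by rewrite mulr_gt0 ?pi_gt0.
rewrite /theta_avg Rintegral_cst; last exact: measurable_itv.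
have := lebesgue_measure_itv (`[0%R, 2 * pi]%R : interval R).
rewrite /= lte_fin pi2_gt0 => ->.
by rewrite /= subr0 mul1r mulVf ?gt_eqF.
Qed.

Lemma oneD_realM_neq0 (l : R) (S : C) : 0 < 'Im S -> 1 + l%:C * S != 0.
Proof.
move=> S_im; apply: contraTneq S_im => lS0.
have l0 : l != 0 by apply: contra_eq_neq lS0 => ->; rewrite mul0r addr0 oner_neq0.
have -> : S = (- l^-1)%:C.
  have lC : l%:C != 0 by rewrite fmorph_eq0.
  apply: (mulfI lC).
  rewrite -rmorphM mulrN mulfV // rmorphN.
  by apply/eqP; rewrite -addr_eq0 addrC lS0.
by rewrite -complexIm /= ltxx.
Qed.

Variables (c : R) (J : nat) (lam om : 'I_J -> R) (S0 : C -> C).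
Hypothesis S0_spec : is_S0 c lam om S0.

Lemma is_S0_denom_neq0 z : 0 < 'Im z -> c%:C * M0 lam om (S0 z) - z != 0.
Proof.
move=> z_im; have [S_im S_eq] := S0_spec z_im.
by apply: contraTneq S_im => denom0; rewrite S_eq denom0 invr0 -complexIm ltxx.
Qed.

Lemma is_S0_inj : {in [pred z | 0 < 'Im z] &, injective S0}.
Proof.
move=> z w z_im w_im Szw.
have [_ Sz] := S0_spec z_im; have [_ Sw] := S0_spec w_im.
apply/oppr_inj/(addrI (c%:C * M0 lam om (S0 z))).
by rewrite -[LHS]invrK -Sz Szw [in LHS]Sw invrK.
Qed.

End Stieltjes.

Section CalM.
Variable R : realType.
Local Notation C := R[i].
Variables (c : R) (J D : nat) (lam om : 'I_J -> R) (S0 : C -> C) (z : 'I_D -> C).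

Lemma calM_hermitian : adjmx (calM c lam om S0 z) = calM c lam om S0 z.
Proof. by apply: gram_hermitian; rewrite conjc_inv conjc_nat. Qed.

Hypotheses (lam_inj : injective lam) (S0_spec : is_S0 c lam om S0).
Hypotheses (JD : (J <= D)%N) (z_inj : injective z) (z_im : forall d, 0 < 'Im (z d)).

Lemma u0_orthogonal_eq0 (y : 'cV[C]_J) :
  \sum_j y j 0 = 0 -> (forall d, (adjmx (u0 c lam om S0 (z d)) *m y) 0 0 = 0) ->
  y = 0.
Proof.
move=> sum_y orth.
have lamC_inj : injective (fun j => (lam j)%:C) by move=> i j /complexI/lam_inj.
have S0z_inj : injective (S0 \o z).
  by move=> d e /(is_S0_inj S0_spec (z_im d) (z_im e))/z_inj.
have denom_neq0 k d : 1 + (lam k)%:C * (S0 \o z) d != 0.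
  exact/oneD_realM_neq0/(S0_spec (z_im d)).1.
have pf_y d :
    \sum_j conjc (y j 0) * ((lam j)%:C / (1 + (lam j)%:C * (S0 \o z) d)) = 0.
  have u0_neq0 : (theta_avg R)%:C / (c%:C * M0 lam om (S0 (z d)) - z d) ^+ 2 != 0.
    by rewrite theta_avg1 mul1r invr_eq0 expf_neq0 ?is_S0_denom_neq0.
  have /eqP := orth d; rewrite adjmx_mul_col conjc_eq0 => /eqP orth_d.
  apply: (mulfI u0_neq0); rewrite mulr0 mulr_sumr -[RHS]orth_d.
  apply: eq_bigr => j _; rewrite !mxE -[RHS]mulrA; congr (_ * _); exact: mulrC.
have conj_y0 := partial_fractions_free lamC_inj JD S0z_inj denom_neq0 _ pf_y.
apply/matrixP => j i; rewrite ord1 mxE -[y j 0]conjcK conj_y0 ?rmorph0 //.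
by rewrite -rmorph_sum sum_y rmorph0.
Qed.

Lemma calM_form_gt0 (y : 'cV[C]_J) : y != 0 -> \sum_j y j 0 = 0 ->
  0 < (adjmx y *m calM c lam om S0 z *m y) 0 0.
Proof.
move=> y_neq0 sum_y.
have [d u0_y | orth] :=
  pickP (fun d => (adjmx (u0 c lam om S0 (z d)) *m y) 0 0 != 0).
  exact: gram_form_gt0 u0_y.
by case/eqP: y_neq0; apply: u0_orthogonal_eq0 => // d; apply/eqP/negbFE/orth.
Qed.

End CalM.

Theorem proposition1 (R : realType) (J D : nat) (c : R)
  (lam om : 'I_J -> R) (S0 : R[i] -> R[i]) (z : 'I_D -> R[i])
  (B : 'M[R]_(J, J.-1)) :
  0 < c ->
  (forall j, 0 <= om j) -> \sum_(j < J) om j = 1 ->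
  (forall j, 0 <= lam j) -> injective lam ->
  is_S0 c lam om S0 ->
  (J <= D)%N -> injective z -> (forall d, 0 < Im (z d)) ->
  \rank B = J.-1 -> B^T *m (const_mx 1 : 'cV[R]_J) = 0 ->
  posdef (map_mx (fun r : R => r%:C) B^T *m calM c lam om S0 z
          *m map_mx (fun r : R => r%:C) B).
Proof.
move=> _ _ _ _ lam_inj S0_spec JD z_inj z_im rkB B1.
apply: (posdef_compress (P := fun y => \sum_j y j 0 = 0)) => //.
- exact: calM_hermitian.
- by move=> x; apply: sum_realmx_mul.
- by move=> y sum_y y_neq0; apply: calM_form_gt0.
Qed.
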